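(* Let $J\subseteq\mathbb{R}$ be an interval, $f:J\to\mathbb{R}$ convex, $a,b\in J$, and $\nu\in[0,1]$. Put $r=\min\{\nu,1-\nu\}$, $R=\max\{\nu,1-\nu\}$ and $$\Phi_f(\nu):=\int_0^1\left(\frac{f\big(a\nabla_{\nu\lambda}b\big)+f\big(b\nabla_{(1-\nu)\lambda}a\big)}{2}-f\Big(a\nabla_{\frac{1+\lambda(2\nu-1)}{2}}b\Big)\right)d\lambda .$$ Then $$2r\,\Phi_f(\nu)\le \mathfrak C_{f,\nu}(a,b)-f\big(a\nabla_\nu b\big)\le 2R\,\Phi_f(\nu).$$
   Context: For real $x,y$ and $\mu\in[0,1]$, $x\nabla_\mu y:=(1-\mu)x+\mu y$. For $f$ convex on an interval containing $a,b$ and $\nu\in[0,1]$, $$\mathfrak C_{f,\nu}(a,b):=(1-\nu)\int_0^1 f\big(a\nabla_{\nu\lambda}b\big)\,d\lambda+\nu\int_0^1 f\big(b\nabla_{(1-\nu)\lambda}a\big)\,d\lambda .$$ *)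

From Stdlib Require Import Reals.
From Coquelicot Require Import Coquelicot.
Open Scope R_scope.

Definition nabla (x y mu : R) : R := (1 - mu) * x + mu * y.

Definition is_interval (J : R -> Prop) : Prop :=
  forall x y z, J x -> J z -> x <= y <= z -> J y.

Definition convex_on (J : R -> Prop) (f : R -> R) : Prop :=
  forall x y t, J x -> J y -> 0 <= t <= 1 ->
    f ((1 - t) * x + t * y) <= (1 - t) * f x + t * f y.

Definition frakC (f : R -> R) (nu a b : R) : R :=
  (1 - nu) * RInt (fun l => f (nabla a b (nu * l))) 0 1
  + nu * RInt (fun l => f (nabla b a ((1 - nu) * l))) 0 1.

Definition Phi (f : R -> R) (nu a b : R) : R :=
  RInt (fun l => (f (nabla a b (nu * l)) + f (nabla b a ((1 - nu) * l))) / 2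
                 - f (nabla a b ((1 + l * (2 * nu - 1)) / 2))) 0 1.

From Stdlib Require Import Reals Lra Psatz Classical.
From Coquelicot Require Import Coquelicot.
Open Scope R_scope.

(* With F s := f (a ∇_s b), put x := ν λ and y := 1 - (1 - ν) λ.  Then
   (1 - ν) x + ν y = ν and (x + y) / 2 = (1 + λ (2ν - 1)) / 2, so the integrand of
   C_{f,ν}(a,b) - f (a ∇_ν b) is the ν-Jensen gap of F at (x, y), and that of Φ_f(ν)
   is its midpoint Jensen gap.  Comparing the two gaps is two applications of
   convexity (through the midpoint, resp. through the ν-point), giving
   2 r gap_{1/2} <= gap_ν <= 2 R gap_{1/2} pointwise; integrating over λ concludes.
   All integrands are Riemann integrable because a convex function on a compact
   interval is continuous inside and has one-sided limits at the ends. *)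

Lemma antitone_bounded_right_limit (g : R -> R) (lo c B : R) :
  lo < c ->
  (forall x y, lo < x -> x < y -> y < c -> g y <= g x) ->
  (forall x, lo < x < c -> g x <= B) ->
  exists L, filterlim g (at_right lo) (locally L).
Proof.
  intros Hlc Hanti Hbound.
  set (E := fun v => exists x, lo < x < c /\ v = g x).
  assert (HE : bound E) by (exists B; intros v [x [Hx ->]]; auto).
  assert (HEne : exists v, E v)
    by (exists (g ((lo + c) / 2)); exists ((lo + c) / 2); split; [lra|auto]).
  destruct (completeness E HE HEne) as [s [Hub Hlub]].
  exists s. apply filterlim_locally. intros eps.
  assert (Hx0 : exists x0, lo < x0 < c /\ s - eps < g x0).
  { apply NNPP; intros Hnone.
    assert (s <= s - eps); [|destruct eps; simpl in *; lra].
    apply Hlub; intros v [x [Hx ->]].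
    apply Rnot_lt_le; intros Hlt; apply Hnone; eauto. }
  destruct Hx0 as [x0 [Hx0 Hgx0]].
  assert (Hd : 0 < x0 - lo) by lra.
  exists (mkposreal _ Hd). intros y Hy Hlo.
  apply Rabs_lt_between' in Hy; simpl in Hy.
  assert (g x0 <= g y) by (apply Hanti; lra).
  assert (g y <= s) by (apply Hub; exists y; split; [lra|auto]).
  apply Rabs_lt_between'. lra.
Qed.

Lemma Rabs_le_between_scaled t X P N : 0 <= t -> t * N <= X <= t * P ->
  Rabs X <= t * (Rabs P + Rabs N).
Proof.
  intros Ht [HN HP].
  assert (t * P <= t * Rabs P) by (apply Rmult_le_compat_l; [lra|apply Rle_abs]).
  assert (t * - N <= t * Rabs N).
  { apply Rmult_le_compat_l; [lra|rewrite <- Rabs_Ropp; apply Rle_abs]. }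
  assert (0 <= t * Rabs P) by (apply Rmult_le_pos; [lra|apply Rabs_pos]).
  assert (0 <= t * Rabs N) by (apply Rmult_le_pos; [lra|apply Rabs_pos]).
  apply Rabs_le; lra.
Qed.

Section ConvexOnSegment.

Variables (h : R -> R) (lo hi : R).
Hypothesis h_convex : convex_on (fun x => lo <= x <= hi) h.

Lemma convex_increment_bounds z w t :
  lo <= z - w <= hi -> lo <= z <= hi -> lo <= z + w <= hi -> 0 <= t <= 1 ->
  t * (h z - h (z - w)) <= h (z + t * w) - h z <= t * (h (z + w) - h z).
Proof.
  intros Hzw Hz Hzw' Ht.
  split.
  - assert (Hs : 0 <= t / (1 + t) <= 1).
    { split; [apply Rdiv_le_0_compat; lra|].
      apply Rmult_le_reg_r with (1 + t); [lra|].
      unfold Rdiv; rewrite Rmult_assoc, Rinv_l; lra. }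
    pose proof (h_convex (z + t * w) (z - w) _ ltac:(simpl; nra) Hzw Hs) as Hc.
    replace ((1 - t / (1 + t)) * (z + t * w) + t / (1 + t) * (z - w)) with z in Hc
      by (field; lra).
    apply Rmult_le_compat_l with (r := 1 + t) in Hc; [|lra].
    replace ((1 + t) * ((1 - t / (1 + t)) * h (z + t * w) + t / (1 + t) * h (z - w)))
      with (h (z + t * w) + t * h (z - w)) in Hc by (field; lra).
    lra.
  - pose proof (h_convex z (z + w) t Hz Hzw' Ht) as Hc.
    replace ((1 - t) * z + t * (z + w)) with (z + t * w) in Hc by ring.
    lra.
Qed.

Lemma convex_locally_lipschitz z : lo < z < hi ->
  exists e K, 0 < e /\ 0 <= K /\
    forall x, Rabs (x - z) <= e -> Rabs (h x - h z) <= K * Rabs (x - z).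
Proof.
  intros Hz.
  set (e := Rmin (z - lo) (hi - z)).
  assert (He : 0 < e) by (apply Rmin_glb_lt; lra).
  assert (Hel : e <= z - lo) by apply Rmin_l.
  assert (Her : e <= hi - z) by apply Rmin_r.
  set (A := Rabs (h (z + e) - h z)); set (B := Rabs (h z - h (z - e))).
  assert (HAB : 0 <= A + B)
    by (unfold A, B; pose proof (Rabs_pos (h (z + e) - h z));
        pose proof (Rabs_pos (h z - h (z - e))); lra).
  exists e, ((A + B) / e); repeat split; [exact He|apply Rdiv_le_0_compat; lra|].
  intros x Hx.
  set (t := Rabs (x - z) / e).
  assert (Ht : 0 <= t <= 1).
  { unfold t; split; [apply Rdiv_le_0_compat; [apply Rabs_pos|lra]|].
    apply Rmult_le_reg_r with e; [lra|].
    unfold Rdiv; rewrite Rmult_assoc, Rinv_l; lra. }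
  replace ((A + B) / e * Rabs (x - z)) with (t * (A + B)) by (unfold t; field; lra).
  destruct (Rle_dec z x) as [Hzx|Hxz].
  - replace x with (z + t * e) by (unfold t; rewrite Rabs_right by lra; field; lra).
    apply (Rabs_le_between_scaled _ _ (h (z + e) - h z) (h z - h (z - e))); [lra|].
    apply convex_increment_bounds; auto; lra.
  - replace x with (z + t * (- e)) by (unfold t; rewrite Rabs_left by lra; field; lra).
    replace (A + B) with (Rabs (h (z + - e) - h z) + Rabs (h z - h (z - - e))).
    + apply (Rabs_le_between_scaled _ _ (h (z + - e) - h z) (h z - h (z - - e))); [lra|].
      apply convex_increment_bounds; auto; lra.
    + unfold A, B. rewrite (Rabs_minus_sym (h (z + - e))).
      replace (z + - e) with (z - e) by ring; replace (z - - e) with (z + e) by ring.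
      rewrite (Rabs_minus_sym (h z) (h (z + e))). ring.
Qed.

Lemma convex_continuous_interior z : lo < z < hi -> continuous h z.
Proof.
  intros Hz. destruct (convex_locally_lipschitz z Hz) as [e [K [He [HK0 HK]]]].
  apply continuity_pt_filterlim. intros eps Heps.
  set (K' := K + 1).
  assert (HK' : 0 < K') by (unfold K'; lra).
  exists (Rmin e (eps / K')); split.
  { apply Rmin_glb_lt; [lra|apply Rdiv_lt_0_compat; lra]. }
  intros x [_ Hx]. simpl in *. unfold R_dist in *.
  pose proof (Rmin_l e (eps / K')); pose proof (Rmin_r e (eps / K')).
  eapply Rle_lt_trans; [apply HK; lra|].
  apply Rle_lt_trans with (K' * Rabs (x - z)).
  - apply Rmult_le_compat_r; [apply Rabs_pos|unfold K'; lra].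
  - apply Rmult_lt_reg_r with (/ K'); [apply Rinv_0_lt_compat; lra|].
    rewrite Rmult_comm, <- Rmult_assoc, Rinv_l, Rmult_1_l by lra. unfold Rdiv in *. lra.
Qed.

Lemma convex_slope_antitone x y : lo <= x -> x < y -> y < hi ->
  (h y - h hi) / (hi - y) <= (h x - h hi) / (hi - x).
Proof.
  intros Hx Hxy Hy.
  set (t := (y - x) / (hi - x)).
  assert (Ht : 0 <= t <= 1).
  { unfold t; split; [apply Rdiv_le_0_compat; lra|].
    apply Rmult_le_reg_r with (hi - x); [lra|].
    unfold Rdiv; rewrite Rmult_assoc, Rinv_l; lra. }
  pose proof (h_convex x hi t ltac:(simpl; lra) ltac:(simpl; lra) Ht) as Hc.
  replace ((1 - t) * x + t * hi) with y in Hc by (unfold t; field; lra).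
  replace t with (1 - (hi - y) / (hi - x)) in Hc by (unfold t; field; lra).
  apply Rmult_le_reg_r with (hi - y); [lra|].
  replace ((h y - h hi) / (hi - y) * (hi - y)) with (h y - h hi) by (field; lra).
  replace ((h x - h hi) / (hi - x) * (hi - y)) with ((hi - y) / (hi - x) * (h x - h hi))
    by (field; lra).
  lra.
Qed.

(* h x = h hi + (hi - x) g x with g the slope below, antitone and bounded by g lo. *)
Lemma convex_right_limit : lo < hi -> exists L, filterlim h (at_right lo) (locally L).
Proof.
  intros Hlh.
  set (g := fun x => (h x - h hi) / (hi - x)).
  destruct (antitone_bounded_right_limit g lo hi (g lo) Hlh) as [L HL].
  { intros x y Hx Hxy Hy; apply convex_slope_antitone; lra. }
  { intros x Hx; apply convex_slope_antitone; lra. }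
  exists (h hi + (hi - lo) * L).
  apply filterlim_ext_loc with (fun x => h hi + (hi - x) * g x).
  { assert (Hd : 0 < hi - lo) by lra.
    exists (mkposreal _ Hd); intros x Hx Hlx.
    apply Rabs_lt_between' in Hx; simpl in Hx.
    unfold g; field; lra. }
  apply (filterlim_comp_2 (G := locally (h hi)) (H := locally ((hi - lo) * L))
    (fun _ => h hi) (fun x => (hi - x) * g x) Rplus).
  - apply filterlim_const.
  - apply (filterlim_comp_2 (G := locally (hi - lo)) (H := locally L)
      (fun x => hi - x) g Rmult); [|exact HL|exact (@filterlim_mult R_AbsRing (hi - lo) L)].
    apply (filterlim_filter_le_1 (F := locally lo)).
    { intros P [d Hd]; exists d; intros y Hy _; apply Hd, Hy. }
    apply (continuous_minus (fun _ => hi) (fun x => x));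
      [apply continuous_const|apply continuous_id].
  - exact (@filterlim_plus R_AbsRing R_NormedModule (h hi) ((hi - lo) * L)).
Qed.

End ConvexOnSegment.

Lemma convex_left_limit h lo hi : convex_on (fun x => lo <= x <= hi) h -> lo < hi ->
  exists L, filterlim h (at_left hi) (locally L).
Proof.
  intros Hc Hlh.
  assert (Hc' : convex_on (fun x => - hi <= x <= - lo) (fun x => h (- x))).
  { intros x y t Hx Hy Ht; simpl in *.
    replace (- ((1 - t) * x + t * y)) with ((1 - t) * - x + t * - y) by ring.
    apply Hc; simpl; lra. }
  destruct (convex_right_limit _ _ _ Hc' ltac:(lra)) as [L HL].
  exists L.
  apply filterlim_ext with (fun x => h (- - x)); [intros x; rewrite Ropp_involutive; auto|].
  exact (filterlim_comp _ _ _ Ropp (fun x => h (- x)) _ _ _ (filterlim_Ropp_left hi) HL).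
Qed.

(* h may jump at lo and hi, but it agrees on ]lo, hi[ with its continuous extension. *)
Lemma ex_RInt_convex h lo hi : convex_on (fun x => lo <= x <= hi) h -> lo < hi ->
  ex_RInt h lo hi.
Proof.
  intros Hc Hlh.
  destruct (convex_right_limit _ _ _ Hc Hlh) as [L0 HL0].
  destruct (convex_left_limit _ _ _ Hc Hlh) as [L1 HL1].
  destruct (C0_extension_lt h L0 L1 lo hi Hlh
              (fun z Hz => convex_continuous_interior _ _ _ Hc z Hz) HL0 HL1)
    as [g [Hg [Egh _]]].
  apply ex_RInt_ext with g.
  { rewrite Rmin_left, Rmax_right by lra. intros x Hx; apply Egh, Hx. }
  apply (@ex_RInt_continuous R_CompleteNormedModule); intros z _; apply Hg.
Qed.

Definition jensen_gap (h : R -> R) (nu x y : R) : R :=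
  (1 - nu) * h x + nu * h y - h ((1 - nu) * x + nu * y).

Lemma jensen_gap_swap h nu x y : jensen_gap h nu x y = jensen_gap h (1 - nu) y x.
Proof.
  unfold jensen_gap. replace ((1 - (1 - nu)) * y + (1 - nu) * x) with ((1 - nu) * x + nu * y)
    by ring. ring.
Qed.

Section JensenGap.

Variables (h : R -> R) (lo hi : R).
Hypothesis h_convex : convex_on (fun x => lo <= x <= hi) h.

Lemma jensen_gap_bounds_le_half nu x y :
  0 <= nu <= 1 / 2 -> lo <= x <= hi -> lo <= y <= hi ->
  2 * nu * jensen_gap h (1 / 2) x y <= jensen_gap h nu x y <=
  2 * (1 - nu) * jensen_gap h (1 / 2) x y.
Proof.
  intros Hnu Hx Hy. unfold jensen_gap.
  set (m := (1 - 1 / 2) * x + 1 / 2 * y).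
  set (p := (1 - nu) * x + nu * y).
  assert (Hm : lo <= m <= hi) by (unfold m; lra).
  assert (Hp : lo <= p <= hi) by (unfold p; nra).
  split.
  - pose proof (h_convex x m (2 * nu) Hx Hm ltac:(lra)) as Hc.
    replace ((1 - 2 * nu) * x + 2 * nu * m) with p in Hc by (unfold m, p; field).
    lra.
  - set (t := (1 - 2 * nu) / (2 * (1 - nu))).
    assert (Ht : 0 <= t <= 1).
    { unfold t; split; [apply Rdiv_le_0_compat; lra|].
      apply Rmult_le_reg_r with (2 * (1 - nu)); [lra|].
      unfold Rdiv; rewrite Rmult_assoc, Rinv_l; lra. }
    pose proof (h_convex p y t Hp Hy Ht) as Hc.
    replace ((1 - t) * p + t * y) with m in Hc by (unfold m, p, t; field; lra).
    apply Rmult_le_compat_l with (r := 2 * (1 - nu)) in Hc; [|lra].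
    replace (2 * (1 - nu) * ((1 - t) * h p + t * h y)) with (h p + (1 - 2 * nu) * h y)
      in Hc by (unfold t; field; lra).
    lra.
Qed.

Lemma jensen_gap_bounds nu x y :
  0 <= nu <= 1 -> lo <= x <= hi -> lo <= y <= hi ->
  2 * Rmin nu (1 - nu) * jensen_gap h (1 / 2) x y <= jensen_gap h nu x y <=
  2 * Rmax nu (1 - nu) * jensen_gap h (1 / 2) x y.
Proof.
  intros Hnu Hx Hy.
  destruct (Rle_dec nu (1 / 2)).
  - rewrite Rmin_left, Rmax_right by lra. apply jensen_gap_bounds_le_half; auto; lra.
  - rewrite Rmin_right, Rmax_left by lra.
    rewrite (jensen_gap_swap h nu), (jensen_gap_swap h (1 / 2)).
    replace (1 - 1 / 2) with (1 / 2) by field.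
    pose proof (jensen_gap_bounds_le_half (1 - nu) y x ltac:(lra) Hy Hx) as H.
    replace (1 - (1 - nu)) with nu in H by ring.
    exact H.
Qed.

End JensenGap.

Lemma convex_on_comp_affine h lo hi al be :
  convex_on (fun x => lo <= x <= hi) h ->
  (forall l, 0 <= l <= 1 -> lo <= al + be * l <= hi) ->
  convex_on (fun l => 0 <= l <= 1) (fun l => h (al + be * l)).
Proof.
  intros Hc Hrange x y t Hx Hy Ht.
  replace (al + be * ((1 - t) * x + t * y)) with
    ((1 - t) * (al + be * x) + t * (al + be * y)) by ring.
  apply Hc; auto.
Qed.

Lemma ex_RInt_convex_comp_affine h lo hi al be :
  convex_on (fun x => lo <= x <= hi) h ->
  (forall l, 0 <= l <= 1 -> lo <= al + be * l <= hi) ->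
  ex_RInt (fun l => h (al + be * l)) 0 1.
Proof.
  intros Hc Hrange.
  apply ex_RInt_convex; [apply (convex_on_comp_affine h lo hi); auto|lra].
Qed.

Lemma is_RInt_lincomb3 (P Q M : R -> R) (IP IQ IM c1 c2 c3 c0 : R) :
  is_RInt P 0 1 IP -> is_RInt Q 0 1 IQ -> is_RInt M 0 1 IM ->
  is_RInt (fun l => c1 * P l + c2 * Q l + c3 * M l + c0) 0 1
    (c1 * IP + c2 * IQ + c3 * IM + c0).
Proof.
  intros iP iQ iM.
  pose proof (is_RInt_plus _ _ _ _ _ _
    (is_RInt_plus _ _ _ _ _ _
       (is_RInt_plus _ _ _ _ _ _ (is_RInt_scal _ _ _ c1 _ iP) (is_RInt_scal _ _ _ c2 _ iQ))
       (is_RInt_scal _ _ _ c3 _ iM))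
    (is_RInt_const 0 1 c0)) as iS.
  replace (c1 * IP + c2 * IQ + c3 * IM + c0) with
    (c1 * IP + c2 * IQ + c3 * IM + (1 - 0) * c0) by ring.
  exact iS.
Qed.

Lemma is_RInt_lincomb3_le (P Q M : R -> R) (IP IQ IM c1 c2 c3 c0 d1 d2 d3 d0 : R) :
  is_RInt P 0 1 IP -> is_RInt Q 0 1 IQ -> is_RInt M 0 1 IM ->
  (forall l, 0 < l < 1 ->
     c1 * P l + c2 * Q l + c3 * M l + c0 <= d1 * P l + d2 * Q l + d3 * M l + d0) ->
  c1 * IP + c2 * IQ + c3 * IM + c0 <= d1 * IP + d2 * IQ + d3 * IM + d0.
Proof.
  intros iP iQ iM Hle.
  apply (is_RInt_le _ _ 0 1 _ _ ltac:(lra)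
           (is_RInt_lincomb3 P Q M IP IQ IM c1 c2 c3 c0 iP iQ iM)
           (is_RInt_lincomb3 P Q M IP IQ IM d1 d2 d3 d0 iP iQ iM) Hle).
Qed.

Lemma nabla_swap a b s : nabla b a s = nabla a b (1 - s).
Proof. unfold nabla; ring. Qed.

Section Segments.

Variables (J : R -> Prop) (f : R -> R) (a b nu : R).
Hypotheses (J_interval : is_interval J) (f_convex : convex_on J f) (Ja : J a) (Jb : J b).
Hypothesis nu_range : 0 <= nu <= 1.

Lemma nabla_mem s : 0 <= s <= 1 -> J (nabla a b s).
Proof.
  intros Hs. unfold nabla.
  destruct (Rle_dec a b).
  - apply (J_interval a _ b); auto; nra.
  - apply (J_interval b _ a); auto; nra.
Qed.

Lemma convex_on_nabla : convex_on (fun s => 0 <= s <= 1) (fun s => f (nabla a b s)).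
Proof.
  intros x y t Hx Hy Ht.
  replace (nabla a b ((1 - t) * x + t * y)) with
    ((1 - t) * nabla a b x + t * nabla a b y) by (unfold nabla; ring).
  apply f_convex; auto; apply nabla_mem; auto.
Qed.

Let seg_a l := f (nabla a b (nu * l)).
Let seg_b l := f (nabla b a ((1 - nu) * l)).
Let seg_mid l := f (nabla a b ((1 + l * (2 * nu - 1)) / 2)).

Lemma ex_RInt_seg_a : ex_RInt seg_a 0 1.
Proof.
  apply ex_RInt_ext with (fun l => f (nabla a b (0 + nu * l))).
  { intros l _. unfold seg_a. rewrite Rplus_0_l. reflexivity. }
  apply (ex_RInt_convex_comp_affine (fun s => f (nabla a b s)) 0 1);
    [exact convex_on_nabla|intros l Hl; nra].
Qed.

Lemma ex_RInt_seg_b : ex_RInt seg_b 0 1.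
Proof.
  apply ex_RInt_ext with (fun l => f (nabla a b (1 + - (1 - nu) * l))).
  { intros l _. unfold seg_b. rewrite nabla_swap. f_equal; f_equal; ring. }
  apply (ex_RInt_convex_comp_affine (fun s => f (nabla a b s)) 0 1);
    [exact convex_on_nabla|intros l Hl; nra].
Qed.

Lemma ex_RInt_seg_mid : ex_RInt seg_mid 0 1.
Proof.
  apply ex_RInt_ext with (fun l => f (nabla a b (1 / 2 + (2 * nu - 1) / 2 * l))).
  { intros l _. unfold seg_mid. f_equal; f_equal; field. }
  apply (ex_RInt_convex_comp_affine (fun s => f (nabla a b s)) 0 1);
    [exact convex_on_nabla|intros l Hl; nra].
Qed.

Lemma Phi_eq_RInt_segments :
  Phi f nu a b = (RInt seg_a 0 1 + RInt seg_b 0 1) / 2 - RInt seg_mid 0 1.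
Proof.
  apply is_RInt_unique.
  replace ((RInt seg_a 0 1 + RInt seg_b 0 1) / 2 - RInt seg_mid 0 1) with
    (1 / 2 * RInt seg_a 0 1 + 1 / 2 * RInt seg_b 0 1 + -1 * RInt seg_mid 0 1 + 0)
    by field.
  eapply is_RInt_ext; [|apply is_RInt_lincomb3; apply (@RInt_correct R_CompleteNormedModule);
    [apply ex_RInt_seg_a|apply ex_RInt_seg_b|apply ex_RInt_seg_mid]].
  intros l _. simpl. unfold seg_a, seg_b, seg_mid. field.
Qed.

Lemma segment_gap_bounds l : 0 <= l <= 1 ->
  2 * Rmin nu (1 - nu) * ((seg_a l + seg_b l) / 2 - seg_mid l) <=
    (1 - nu) * seg_a l + nu * seg_b l - f (nabla a b nu) <=
  2 * Rmax nu (1 - nu) * ((seg_a l + seg_b l) / 2 - seg_mid l).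
Proof.
  intros Hl.
  pose proof (jensen_gap_bounds _ 0 1 convex_on_nabla nu (nu * l) (1 - (1 - nu) * l)
                nu_range ltac:(nra) ltac:(nra)) as H.
  unfold jensen_gap in H; cbv beta in H.
  replace ((1 - nu) * (nu * l) + nu * (1 - (1 - nu) * l)) with nu in H by ring.
  replace ((1 - 1 / 2) * (nu * l) + 1 / 2 * (1 - (1 - nu) * l))
    with ((1 + l * (2 * nu - 1)) / 2) in H by field.
  unfold seg_a, seg_b, seg_mid. rewrite (nabla_swap a b ((1 - nu) * l)).
  set (X := f (nabla a b (nu * l))) in *.
  set (Y := f (nabla a b (1 - (1 - nu) * l))) in *.
  set (Z := f (nabla a b ((1 + l * (2 * nu - 1)) / 2))) in *.
  replace ((1 - 1 / 2) * X + 1 / 2 * Y - Z) with ((X + Y) / 2 - Z) in H by field.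
  exact H.
Qed.

End Segments.

Theorem theorem2p11 (J : R -> Prop) (f : R -> R) (a b nu : R) :
  is_interval J -> convex_on J f -> J a -> J b -> 0 <= nu <= 1 ->
  2 * Rmin nu (1 - nu) * Phi f nu a b <= frakC f nu a b - f (nabla a b nu) /\
  frakC f nu a b - f (nabla a b nu) <= 2 * Rmax nu (1 - nu) * Phi f nu a b.
Proof.
  intros HJ Hf Ha Hb Hnu.
  rewrite (Phi_eq_RInt_segments J f a b nu HJ Hf Ha Hb Hnu); unfold frakC.
  pose proof (segment_gap_bounds J f a b nu HJ Hf Ha Hb Hnu) as Hpt.
  pose proof (@RInt_correct R_CompleteNormedModule _ _ _
                (ex_RInt_seg_a J f a b nu HJ Hf Ha Hb Hnu)) as iA.
  pose proof (@RInt_correct R_CompleteNormedModule _ _ _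
                (ex_RInt_seg_b J f a b nu HJ Hf Ha Hb Hnu)) as iB.
  pose proof (@RInt_correct R_CompleteNormedModule _ _ _
                (ex_RInt_seg_mid J f a b nu HJ Hf Ha Hb Hnu)) as iM.
  set (r := Rmin nu (1 - nu)) in *; set (s := Rmax nu (1 - nu)) in *.
  set (N := f (nabla a b nu)) in *.
  split.
  - pose proof (is_RInt_lincomb3_le _ _ _ _ _ _ r r (- (2 * r)) 0 (1 - nu) nu 0 (- N)
                  iA iB iM ltac:(intros l Hl; destruct (Hpt l ltac:(lra)); lra)).
    lra.
  - pose proof (is_RInt_lincomb3_le _ _ _ _ _ _ (1 - nu) nu 0 (- N) s s (- (2 * s)) 0
                  iA iB iM ltac:(intros l Hl; destruct (Hpt l ltac:(lra)); lra)).
    lra.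
Qed.
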